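(* Let $f\colon G\to G$ and $g\colon G'\to G'$ be continuous maps of graphs, and let $E\subseteq G$ be a closed set with $f(E)\subseteq E$. Suppose $\varphi\colon G\to G'$ is a semi-conjugacy between $f$ and $g$ which is an almost conjugacy between $f|_E$ and $g$. If $g$ is an irrational rotation of the circle (so $G'$ is a circle), then $f$ has no scrambled pair.
   Context: A graph is a non-degenerate compact connected metric space containing a finite subset $V$ such that each connected component of the complement of $V$ is homeomorphic to an open interval. A continuous map $\varphi\colon G\to G'$ is a semi-conjugacy between $f$ and $g$ if $\varphi$ is onto and $\varphi\circ f=g\circ\varphi$. If $E\subseteq G$ is closed with $f(E)\subseteq E$, such a semi-conjugacy is an almost conjugacy between $f|_E$ and $g$ if: $\varphi(E)=G'$; for every $y\in G'$, $\varphi^{-1}(y)$ is connected; for every $y\in G'$, $\varphi^{-1}(y)\cap E=\partial\varphi^{-1}(y)$ (boundary in $G$); and there is $N\ge1$ such that $\varphi^{-1}(y)\cap E$ has at most $N$ elements for every $y\in G'$. A pair $(x,y)$ is scrambled if $\liminf_{n\to\infty}d(f^n(x),f^n(y))=0$ and $\limsup_{n\to\infty}d(f^n(x),f^n(y))>0$. *)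

From HB Require Import structures.
From mathcomp Require Import all_boot all_order all_algebra.
From mathcomp Require Import all_classical all_reals all_analysis.
Set Implicit Arguments. Unset Strict Implicit. Unset Printing Implicit Defensive.
Import Order.TTheory GRing.Theory Num.Theory.
Import numFieldNormedType.Exports.
Local Open Scope classical_set_scope.
Local Open Scope ring_scope.

Definition homeo_onto {S T : topologicalType} (A : set S) (B : set T)
  (h : S -> T) (k : T -> S) : Prop :=
  [/\ {within A, continuous h} /\ {within B, continuous k},
      h @` A `<=` B, k @` B `<=` A,
      (forall x, A x -> k (h x) = x) & (forall y, B y -> h (k y) = y)].

Definition is_graph (R : realType) (G : metricType R) : Prop :=
  [/\ exists x y : G, x <> y,
      compact [set: G],
      connected [set: G] &
      exists V : set G, finite_set V /\
        forall x : G, ~ V x ->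
          exists (h : R -> G) (k : G -> R),
            homeo_onto (`]0%R, 1%R[%classic : set R) (connected_component (~` V) x) h k].

Definition boundary {T : topologicalType} (A : set T) : set T :=
  closure A `\` interior A.

Definition semi_conjugacy {T U : topologicalType} (f : T -> T) (g : U -> U)
  (phi : T -> U) : Prop :=
  [/\ continuous phi, (forall y, exists x, phi x = y) & phi \o f = g \o phi].

Definition almost_conjugacy {T U : topologicalType} (E : set T)
  (phi : T -> U) : Prop :=
  [/\ phi @` E = [set: U],
      (forall y, connected (phi @^-1` [set y])),
      (forall y, phi @^-1` [set y] `&` E = boundary (phi @^-1` [set y])) &
      exists N : nat, (1 <= N)%N /\
        forall y, ((phi @^-1` [set y] `&` E) #<= `I_N)%card].

(* g is (topologically conjugate to) an irrational rotation of the circle: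
   there is a continuous surjection p : R -> G' whose fibres are exactly the
   cosets of Z (so p induces a homeomorphism R/Z ~ G', G' being compact
   Hausdorff) and an irrational alpha with g (p x) = p (x + alpha). *)
Definition irrational_rotation (R : realType) (G' : metricType R)
  (g : G' -> G') : Prop :=
  exists (p : R -> G') (alpha : R),
    [/\ continuous p,
        (forall y, exists x, p x = y),
        (forall x y, p x = p y <-> exists k : int, x - y = k%:~R),
        (forall q : rat, alpha <> ratr q) &
        (forall x, g (p x) = p (x + alpha))].

Definition scrambled (R : realType) (G : metricType R) (f : G -> G)
  (x y : G) : Prop :=
  limn_einf (fun n => (mdist (iter n f x) (iter n f y))%:E) = 0%E /\
  (0 < limn_esup (fun n => (mdist (iter n f x) (iter n f y))%:E))%E.

(* Write a_n = f^n x and b_n = f^n y.  Since phi carries f to the irrational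
   rotation, phi a_n = p (s + n alpha), so the fibres of phi met by the orbit
   of x are pairwise distinct.

   If phi x <> phi y, the angles of phi a_n and phi b_n always differ by the
   same non-integer amount; a common accumulation point u of a_n and b_n
   (there is one if liminf d(a_n, b_n) = 0) would give two angles differing
   by that amount with the same image phi u, which is impossible.

   If phi x = phi y, then a_n and b_n lie in a common connected fibre, which
   therefore contains points at every distance j eps / N (0 <= j <= N) from
   a_n whenever d(a_n, b_n) >= eps.  Accumulation points of these N + 1
   families along a common subsequence are pairwise distinct, lie in one
   fibre, and are limits of points of infinitely many different fibres; so
   they are boundary points of their fibre, hence points of E, and that fibre
   meets E in more than N points. *)

From mathcomp Require Import all_boot all_order all_algebra.
From mathcomp Require Import all_classical all_reals all_analysis.
From mathcomp Require Import ring lra.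
Local Open Scope classical_set_scope.

Section NoScrambledPairs.
Set Implicit Arguments. Unset Strict Implicit. Unset Printing Implicit Defensive.
Import Order.TTheory GRing.Theory Num.Theory.
Import numFieldNormedType.Exports.
Local Open Scope ring_scope.

Definition frequently (P : nat -> Prop) : Prop :=
  forall m, exists2 n, (m <= n)%N & P n.

Section MetricSequences.
Variable R : realType.

Lemma compact_frequent_cluster (T : pseudoMetricType R) (A : set T)
    (P : R -> nat -> Prop) (z : nat -> T) :
  compact A -> (forall n, A (z n)) ->
  (forall d1 d2 n, d1 <= d2 -> P d1 n -> P d2 n) ->
  (forall d, 0 < d -> frequently (P d)) ->
  exists2 t, A t &
    forall d, 0 < d -> frequently (fun n => P d n /\ ball t d (z n)).
Proof.
move=> cA zA Pmono Pfreq.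
(* The tails {z n | m <= n, P d n} generate a proper filter that clusters in A. *)
pose F : set_system T := fun B => exists d m, 0 < d /\
  forall n, (m <= n)%N -> P d n -> B (z n).
have FF : ProperFilter F.
  split.
    by move=> [d [m [d0 tail]]]; have [n mn Pn] := Pfreq d d0 m; exact: tail n mn Pn.
  split.
  - by exists 1, 0%N.
  - move=> B1 B2 [d1 [m1 [d10 tail1]]] [d2 [m2 [d20 tail2]]].
    exists (Num.min d1 d2), (maxn m1 m2); split; first by rewrite lt_min d10.
    move=> n; rewrite geq_max => /andP[m1n m2n] Pn; split.
      by apply: tail1 => //; apply: Pmono Pn; rewrite ge_min lexx.
    by apply: tail2 => //; apply: Pmono Pn; rewrite ge_min lexx orbT.
  - move=> B1 B2 sB [d [m [d0 tail]]]; exists d, m; split => // n mn Pn.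
    exact/sB/tail.
have FA : F A by exists 1, 0%N; split => // n _ _; exact: zA.
have [t [At clt]] := cA F FF FA.
exists t => // d d0 m.
have FB : F (z @` [set n | (m <= n)%N /\ P d n]).
  by exists d, m; split => // n mn Pn; exists n.
have [_ [[n [mn Pn] <-] bn]] := clt _ _ FB (nbhsx_ballx t d d0).
by exists n.
Qed.

Lemma compact_frequent_cluster_family (T : pseudoMetricType R)
    (P : R -> nat -> Prop) (c : nat -> nat -> T) k :
  compact [set: T] ->
  (forall d1 d2 n, d1 <= d2 -> P d1 n -> P d2 n) ->
  (forall d, 0 < d -> frequently (P d)) ->
  exists t : nat -> T, forall d, 0 < d -> frequently (fun n =>
    P d n /\ forall j, (j <= k)%N -> ball (t j) d (c j n)).
Proof.
move=> cT; elim: k P => [|k IHk] P Pmono Pfreq.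
  have [t0 _ t0_cluster] :=
    compact_frequent_cluster (z := c 0%N) cT (fun _ => I) Pmono Pfreq.
  exists (fun _ => t0) => d d0 m; have [n mn [Pn bn]] := t0_cluster d d0 m.
  by exists n => //; split => // j; rewrite leqn0 => /eqP ->.
have [t t_cluster] := IHk P Pmono Pfreq.
pose Q d n := P d n /\ forall j, (j <= k)%N -> ball (t j) d (c j n).
have Qmono d1 d2 n : d1 <= d2 -> Q d1 n -> Q d2 n.
  move=> d12 [Pn bn]; split; first exact: Pmono Pn.
  by move=> j jk; apply: le_ball d12 _ (bn j jk).
have [t' _ t_cluster'] :=
  compact_frequent_cluster (z := c k.+1) cT (fun _ => I) Qmono t_cluster.
exists (fun j => if j == k.+1 then t' else t j) => d d0 m.
have [n mn [[Pn bn] bn']] := t_cluster' d d0 m.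
exists n => //; split => // j; rewrite leq_eqVlt => /orP[/eqP ->|jk].
  by rewrite eqxx.
by rewrite ltn_eqF //; apply: bn.
Qed.

Lemma continuous_eq_of_approx (T1 T2 : pseudoMetricType R) (U : metricType R)
    (k1 : T1 -> U) (k2 : T2 -> U) t1 t2 (w1 : nat -> T1) (w2 : nat -> T2) :
  {for t1, continuous k1} -> {for t2, continuous k2} ->
  (forall d, 0 < d -> exists n,
     [/\ ball t1 d (w1 n), ball t2 d (w2 n) & k1 (w1 n) = k2 (w2 n)]) ->
  k1 t1 = k2 t2.
Proof.
move=> ck1 ck2 approx; apply: (close_eq (@metric_hausdorff _ U)).
rewrite ball_close => e; have e20 : 0 < e%:num / 2 by [].
have /nbhs_ballP[d1 d10 near1] := ck1 _ (nbhsx_ballx (k1 t1) _ e20).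
have /nbhs_ballP[d2 d20 near2] := ck2 _ (nbhsx_ballx (k2 t2) _ e20).
have [n [b1 b2 eqn]] : exists n, [/\ ball t1 (Num.min d1 d2) (w1 n),
    ball t2 (Num.min d1 d2) (w2 n) & k1 (w1 n) = k2 (w2 n)].
  by apply: approx; rewrite lt_min d10 d20.
apply: (@ball_splitl _ _ (k1 (w1 n))).
  by apply/near1/(le_ball _ b1); rewrite ge_min lexx.
by rewrite eqn; apply/near2/(le_ball _ b2); rewrite ge_min lexx orbT.
Qed.

Lemma mdist_eq_of_approx (T : metricType R) (t1 t2 : T) (w1 w2 : nat -> T) D :
  (forall d, 0 < d -> exists n,
     [/\ ball t1 d (w1 n), ball t2 d (w2 n) & mdist (w1 n) (w2 n) = D]) ->
  mdist t1 t2 = D.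
Proof.
move=> approx; apply/eqP; rewrite eq_le; apply/andP.
suff close_by e : 0 < e -> exists n, [/\ mdist t1 (w1 n) < e / 2,
    mdist t2 (w2 n) < e / 2 & mdist (w1 n) (w2 n) = D].
  split; apply/ler_addgt0Pr => e /close_by[n [b1 b2 dn]].
    have := metric_triangle t1 (w1 n) t2.
    have := metric_triangle (w1 n) (w2 n) t2.
    rewrite (metric_sym (w2 n)) dn; lra.
  have := metric_triangle (w1 n) t1 (w2 n).
  have := metric_triangle t1 t2 (w2 n).
  rewrite dn (metric_sym (w1 n)); lra.
move=> e0; have [n [b1 b2 dn]] := approx (e / 2) (divr_gt0 e0 (ltr0Sn _ 1)).
by move: b1 b2; rewrite !ballEmdist => b1 b2; exists n.
Qed.

Lemma not_interior_fibre (T : pseudoMetricType R) (U : Type) (h : T -> U)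
    (c : nat -> T) t :
  injective (h \o c) ->
  (forall d, 0 < d -> frequently (fun n => ball t d (c n))) ->
  ~ interior (h @^-1` [set h t]) t.
Proof.
move=> hc_inj approx /nbhs_ballP[d d0 fibre_t].
have [n1 _ b1] := approx d d0 0%N; have [n2 n12 b2] := approx d d0 n1.+1.
have /hc_inj eqn : h (c n1) = h (c n2) by rewrite (fibre_t _ b1) (fibre_t _ b2).
by rewrite eqn ltnn in n12.
Qed.

Lemma continuous_mdist (T : metricType R) (a : T) : continuous (mdist a).
Proof.
move=> c B /nbhs_ballP[e e0 sB]; apply/nbhs_ballP; exists e => // y.
rewrite ballEmdist /= => cy; apply: sB.
rewrite -ball_normE /= ltr_distlC.
have := metric_triangle a c y; have := metric_triangle a y c.
rewrite (metric_sym y c); lra.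
Qed.

Lemma connected_mdist_ivt (T : metricType R) (F : set T) a b t :
  connected F -> F a -> F b -> 0 <= t <= mdist a b ->
  exists2 c, F c & mdist a c = t.
Proof.
move=> cF Fa Fb tab.
have /connected_intervalP img : connected (mdist a @` F).
  exact/connected_continuous_connected/continuous_subspaceT/continuous_mdist.
have [||c Fc <-] := img 0 (mdist a b) _ _ t tab; last by exists c.
- by exists a => //; rewrite mdistxx.
- by exists b.
Qed.

Lemma connected_points_at_distances (T : metricType R) (F : nat -> set T)
    (a b : nat -> T) (tau : nat -> R) :
  (forall n, connected (F n)) -> (forall n, F n (a n)) -> (forall n, F n (b n)) ->
  exists c : nat -> nat -> T, forall j n, F n (c j n) /\
    (0 <= tau j <= mdist (a n) (b n) -> mdist (a n) (c j n) = tau j).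
Proof.
move=> cF Fa Fb.
suff /choice[c c_spec] : forall jn : nat * nat, exists cc, F jn.2 cc /\
    (0 <= tau jn.1 <= mdist (a jn.2) (b jn.2) -> mdist (a jn.2) cc = tau jn.1).
  by exists (fun j n => c (j, n)) => j n; exact: c_spec (j, n).
move=> [j n] /=; have [range|_] := boolP (0 <= tau j <= mdist (a n) (b n)).
  by have [cc Fc dc] := connected_mdist_ivt (cF n) (Fa n) (Fb n) range; exists cc.
by exists (a n).
Qed.

Lemma limn_einf0_frequently_lt (u : nat -> R) :
  limn_einf (fun n => (u n)%:E) = 0%E ->
  forall d, 0 < d -> frequently (fun n => u n < d).
Proof.
move=> einf0 d d0 m.
have : (einfs (fun n => (u n)%:E) m <= 0)%E.
  rewrite -einf0 limn_einf_lim; apply: lime_ge; first exact: is_cvg_einfs.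
  by exists m => // n /= mn; apply: nondecreasing_einfs.
have d0' : (0 < d%:E)%E by rewrite lte_fin.
move=> /le_lt_trans /(_ d0') /ereal_inf_lt [_ [n /= mn <-]].
by rewrite lte_fin; exists n.
Qed.

Lemma limn_esup_gt0_frequently_ge (u : nat -> R) :
  (0 < limn_esup (fun n => (u n)%:E))%E ->
  exists2 e, 0 < e & frequently (fun n => e <= u n).
Proof.
move=> esup_gt0.
have [e e0 e_lt] : exists2 e, 0 < e & (e%:E < limn_esup (fun n => (u n)%:E))%E.
  move: esup_gt0; case: (limn_esup _) => [r||] //.
  - rewrite lte_fin => r0; exists (r / 2); first by rewrite divr_gt0.
    by rewrite lte_fin ltr_pdivrMr // ltr_pMr // ltr1n.
  - by move=> _; exists 1 => //; rewrite ltry.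
exists e => // m.
have : (limn_esup (fun n => (u n)%:E) <= esups (fun n => (u n)%:E) m)%E.
  rewrite limn_esup_lim; apply: lime_le; first exact: is_cvg_esups.
  by exists m => // n /= mn; apply: nonincreasing_esups.
move=> /(lt_le_trans e_lt) /ereal_sup_gt [_ [n /= mn <-]].
by rewrite lte_fin => /ltW; exists n.
Qed.

End MetricSequences.

Lemma subr_floor_itv01 (R : realType) (r : R) : r - (Num.floor r)%:~R \in `[0, 1].
Proof. by have := floor_itv r; rewrite intrD in_itv /=; lra. Qed.

Lemma card_le_I_pigeonhole (T : Type) (S : set T) N (t : nat -> T) :
  (S #<= `I_N)%card -> (forall j, (j <= N)%N -> S (t j)) ->
  ~ (forall i j, (i <= N)%N -> (j <= N)%N -> t i = t j -> i = j).
Proof.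
move=> SN St t_inj.
have : {in `I_N.+1 &, injective t}.
  by move=> i j /set_mem + /set_mem; rewrite /= !ltnS; exact: t_inj.
move=> /Pinj[t' tE].
have sub : t' @` `I_N.+1 `<=` S by move=> _ [j /= jN <-]; rewrite -tE; apply: St.
have := card_le_trans (subset_card_le sub) SN.
by rewrite (card_le_eql (inj_card_eq _)) ?card_le_II ?ltnn //; exact: inj.
Qed.

Section RotationFactor.
Variables (R : realType) (G G' : metricType R) (f : G -> G) (g : G' -> G').
Variables (phi : G -> G') (p : R -> G') (alpha : R).
Hypothesis phi_semiconj : phi \o f = g \o phi.
Hypothesis p_onto : forall y, exists x, p x = y.
Hypothesis p_fibre : forall x y, p x = p y <-> exists k : int, x - y = k%:~R.
Hypothesis alpha_irrational : forall q : rat, alpha <> ratr q.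
Hypothesis g_rotation : forall x, g (p x) = p (x + alpha).

Lemma phi_iter n u : phi (iter n f u) = iter n g (phi u).
Proof.
elim: n => [//|n IHn]; rewrite !iterS -IHn.
exact: (congr1 (fun h => h (iter n f u)) phi_semiconj).
Qed.

Lemma rotation_iter n r : iter n g (p r) = p (r + n%:R * alpha).
Proof.
elim: n => [|n IHn]; first by rewrite mul0r addr0.
by rewrite iterS IHn g_rotation -addrA -[in n.+1%:R]addn1 natrD mulrDl mul1r.
Qed.

Lemma p_subr_floor r : p (r - (Num.floor r)%:~R) = p r.
Proof. by apply/p_fibre; exists (- Num.floor r); rewrite mulrNz; ring. Qed.

Lemma rotation_orbit_inj r : injective (fun n : nat => p (r + n%:R * alpha)).
Proof.
move=> n1 n2 /p_fibre[k hk]; apply/eqP; apply: contraT => n12.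
have nz : (n1%:R - n2%:R : R) != 0 by rewrite subr_eq0 eqr_nat.
have hk' : (n1%:R - n2%:R) * alpha = k%:~R by rewrite -hk; ring.
exfalso; apply: (@alpha_irrational (k%:Q / (n1%:Q - n2%:Q))).
rewrite fmorph_div rmorphB /= !ratr_int -hk' !pmulrn [(_ - _) * alpha]mulrC.
by rewrite mulfK.
Qed.

Hypothesis G_compact : compact [set: G].
Hypothesis phi_cont : continuous phi.
Hypothesis p_cont : continuous p.

Lemma proximal_same_fibre x y :
  limn_einf (fun n => (mdist (iter n f x) (iter n f y))%:E) = 0%E ->
  phi x = phi y.
Proof.
move=> /limn_einf0_frequently_lt prox.
have [s ps] := p_onto (phi x); have [s' ps'] := p_onto (phi y).
pose a n := iter n f x; pose b n := iter n f y.
(* Reducing the angles mod 1 keeps them in the compact interval [0, 1]. *)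
pose th n := s + n%:R * alpha - (Num.floor (s + n%:R * alpha))%:~R.
have phi_a n : phi (a n) = p (th n).
  by rewrite p_subr_floor /a phi_iter -ps rotation_iter.
have phi_b n : phi (b n) = p (th n + (s' - s)).
  rewrite /b phi_iter -ps' rotation_iter; apply/p_fibre.
  by exists (Num.floor (s + n%:R * alpha)); rewrite /th; ring.
have prox_mono d1 d2 n : d1 <= d2 -> mdist (a n) (b n) < d1 -> mdist (a n) (b n) < d2.
  by move=> d12 /lt_le_trans; apply.
have [[u th0] _ cluster] := compact_frequent_cluster (z := fun n => (a n, th n))
  (compact_setX G_compact (@segment_compact R 0 1))
  (fun n => conj I (subr_floor_itv01 _)) prox_mono prox.
have phi_u : phi u = p th0.
  apply: (continuous_eq_of_approx (@phi_cont u) (@p_cont th0) (w1 := a) (w2 := th)).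
  by move=> d d0; have [n _ [_ [bu bth]]] := cluster d d0 0%N; exists n.
have phi_u' : phi u = p (th0 + (s' - s)).
  apply: (continuous_eq_of_approx (@phi_cont u) (@p_cont _) (w1 := b)
    (w2 := fun n => th n + (s' - s))) => d d0.
  have [n _ [abn [bu bth]]] := cluster (d / 2) (divr_gt0 d0 (ltr0Sn _ 1)) 0%N.
  exists n; split => //.
  - by apply: (ball_split bu); rewrite ballEmdist.
  - move: bth; rewrite -!ball_normE /=.
    have -> : th0 + (s' - s) - (th n + (s' - s)) = th0 - th n by ring.
    by move=> /lt_le_trans; apply; rewrite ler_pdivrMr // ler_pMr // ler1n.
rewrite -ps -ps'; move: phi_u; rewrite phi_u' => /p_fibre[k hk].
by apply/p_fibre; exists (- k); rewrite mulrNz -hk; ring.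
Qed.

Variables (E : set G) (N : nat).
Hypothesis fibre_connected : forall y, connected (phi @^-1` [set y]).
Hypothesis fibre_boundary :
  forall y, phi @^-1` [set y] `&` E = boundary (phi @^-1` [set y]).
Hypothesis N_gt0 : (0 < N)%N.
Hypothesis fibre_card : forall y, ((phi @^-1` [set y] `&` E) #<= `I_N)%card.

Lemma orbit_fibres_cluster_in_E (c : nat -> G) r t :
  (forall n, phi (c n) = p (r + n%:R * alpha)) ->
  (forall d, 0 < d -> frequently (fun n => ball t d (c n))) -> E t.
Proof.
move=> phi_c approx; suff [] : (phi @^-1` [set phi t] `&` E) t by [].
rewrite fibre_boundary; split; first exact: subset_closure.
apply: (not_interior_fibre _ approx) => n1 n2 /=.
by rewrite !phi_c => /rotation_orbit_inj.
Qed.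

Lemma same_fibre_not_separated x y : phi x = phi y ->
  ~ (0 < limn_esup (fun n => (mdist (iter n f x) (iter n f y))%:E))%E.
Proof.
move=> exy /limn_esup_gt0_frequently_ge[eps eps0 far].
have [s ps] := p_onto (phi x).
pose a n := iter n f x; pose b n := iter n f y.
have phi_a n : phi (a n) = p (s + n%:R * alpha).
  by rewrite /a phi_iter -ps rotation_iter.
have phi_b n : phi (b n) = phi (a n) by rewrite /a /b !phi_iter exy.
pose tau j : R := j%:R * eps / N%:R.
have N0 : (0 : R) < N%:R by rewrite ltr0n.
have tau_le j : (j <= N)%N -> 0 <= tau j <= eps.
  move=> jN; apply/andP; split; first by rewrite /tau !mulr_ge0 // ltW.
  by rewrite /tau ler_pdivrMr // mulrC ler_pM2l // ler_nat.
have [c c_spec] := connected_points_at_distances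
  (F := fun n => phi @^-1` [set phi (a n)])
  tau (fun n => @fibre_connected _) (fun n => erefl) phi_b.
have c0 n : c 0%N n = a n.
  apply/eqP; rewrite eq_sym -[_ == _]negbK -mdist_gt0 (c_spec 0%N n).2.
    by rewrite /tau mul0r mul0r ltxx.
  by rewrite /tau mul0r mul0r lexx mdist_ge0.
have [t t_cluster] := compact_frequent_cluster_family
  (P := fun _ n => eps <= mdist (a n) (b n))
  c N G_compact (fun _ _ _ _ => id) (fun _ _ => far).
have t_fibre j : (j <= N)%N -> phi (t j) = phi (t 0%N).
  move=> jN; apply: (continuous_eq_of_approx (@phi_cont _) (@phi_cont _)
    (w1 := c j) (w2 := c 0%N)) => d d0.
  have [n _ [_ bn]] := t_cluster d d0 0%N; exists n; split; [exact: bn | exact: bn |].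
  by rewrite (c_spec j n).1 (c_spec 0%N n).1.
have t_dist j : (j <= N)%N -> mdist (t 0%N) (t j) = tau j.
  move=> jN; apply: (mdist_eq_of_approx (w1 := c 0%N) (w2 := c j)) => d d0.
  have [n _ [far_n bn]] := t_cluster d d0 0%N.
  exists n; split; [exact: bn | exact: bn |].
  rewrite c0 (c_spec j n).2 //; have /andP[-> tau_eps] := tau_le j jN.
  exact: le_trans far_n.
have t_E j : (j <= N)%N -> E (t j).
  move=> jN; apply: (orbit_fibres_cluster_in_E (c := c j)).
    by move=> n; rewrite (c_spec j n).1 phi_a.
  by move=> d d0 m; have [n mn [_ bn]] := t_cluster d d0 m; exists n => //; exact: bn.
apply: (card_le_I_pigeonhole (t := t) (fibre_card (phi (t 0%N))))
  => [j jN|i j iN jN tij].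
  by split; [exact: t_fibre | exact: t_E].
have := t_dist i iN; rewrite tij t_dist // /tau.
have Nn : (N%:R : R)^-1 != 0 by rewrite invr_neq0 // lt0r_neq0.
have en : eps != 0 by rewrite lt0r_neq0.
by move=> /(mulIf Nn) /(mulIf en) /eqP; rewrite eqr_nat => /eqP.
Qed.

End RotationFactor.

End NoScrambledPairs.

Theorem lemma3p1 (R : realType) (G G' : metricType R)
  (f : G -> G) (g : G' -> G') (E : set G) (phi : G -> G') :
  is_graph G -> is_graph G' ->
  continuous f -> continuous g ->
  closed E -> f @` E `<=` E ->
  semi_conjugacy f g phi ->
  almost_conjugacy E phi ->
  irrational_rotation g ->
  forall x y : G, ~ scrambled f x y.
Proof.
move=> [_ G_compact _ _] _ _ _ _ _ [phi_cont _ phi_semiconj]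
  [_ fibre_connected fibre_boundary [N [N_gt0 fibre_card]]]
  [p [alpha [p_cont p_onto p_fibre alpha_irrational g_rotation]]] x y [prox sep].
have exy := proximal_same_fibre phi_semiconj p_onto p_fibre g_rotation G_compact
  phi_cont p_cont prox.
exact: (same_fibre_not_separated phi_semiconj p_onto p_fibre alpha_irrational
  g_rotation G_compact phi_cont fibre_connected fibre_boundary N_gt0 fibre_card
  exy sep).
Qed.
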